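(* Let $V$ be a finite set of variables, let $(\mathit{base}, \mathit{stay}, \mathit{step}, \mathit{conc})$ be a generalized acceleration lemma (GAL) over $V$, and let $\mathit{inv}$ be a first-order formula with free variables in $V$. Let $\mathit{inv}' := \mathit{inv}[V \mapsto V']$. Then $(\mathit{base} \land \mathit{inv},\ \mathit{stay} \land \mathit{inv}',\ \mathit{step} \land \mathit{inv}',\ \mathit{conc} \land \mathit{inv})$ is also a GAL over $V$.
   Context: Fix a first-order theory $T$. For a set of variables $X$, $\mathcal{A}(X)$ denotes the set of assignments $\nu: X \to \mathcal{V}$ (values). $X' = \{x' \mid x \in X\}$ is a disjoint primed copy of $X$; for $\nu \in \mathcal{A}(X)$, $\nu' \in \mathcal{A}(X')$ is given by $\nu'(x') = \nu(x)$; for $\nu_1,\nu_2 \in \mathcal{A}(X)$, $\langle \nu_1,\nu_2\rangle := \nu_1 \uplus \nu_2'$. $\nu \models_T \alpha$ denotes entailment in $T$. For a formula $\alpha$, $\alpha[V\mapsto V']$ is the result of replacing each $v\in V$ simultaneously by $v'$. A generalized acceleration lemma (GAL) over $V$ is a tuple $(\mathit{base}, \mathit{stay}, \mathit{step}, \mathit{conc})$ of first-order formulas with $\mathit{base}, \mathit{conc}$ having free variables in $V$ and $\mathit{stay}, \mathit{step}$ having free variables in $V \cup V'$, such that: (I) for every sequence $\alpha \in \mathcal{A}(V)^\omega$ with $\alpha[0] \models_T \mathit{conc}$, if (a) for all $i$, $\langle\alpha[i],\alpha[i+1]\rangle \models_T \mathit{step} \lor \mathit{stay}$, and (b) for all $i$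 there is $j \ge i$ with $\langle\alpha[j],\alpha[j+1]\rangle \models_T \mathit{step}$, then there is $k$ with $\alpha[k] \models_T \mathit{base}$; and (II) for all $\nu,\nu' \in \mathcal{A}(V)$ with $\nu \models_T \mathit{conc}$ and $\langle \nu,\nu'\rangle \models_T \mathit{step}\lor\mathit{stay}$, we have $\nu' \models_T \mathit{conc}$. *)

From Stdlib Require Import List.
Import ListNotations.
Set Implicit Arguments.

Inductive Var : Type := vbase (x : nat) | vprime (x : nat).

Definition Var_eq_dec (a b : Var) : {a = b} + {a <> b}.
Proof. decide equality; apply PeanoNat.Nat.eq_dec. Defined.

Section FO.
Variables (Fsym Psym Val : Type).

Inductive term : Type :=
| tvar (v : Var)
| tapp (f : Fsym) (args : list term).

Inductive formula : Type :=
| ftrue | ffalse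
| fpred (p : Psym) (args : list term)
| feq (t1 t2 : term)
| fnot (a : formula)
| fand (a b : formula)
| f_or (a b : formula)
| fimp (a b : formula)
| fex (x : Var) (a : formula)
| fall (x : Var) (a : formula).

Record structure : Type := Structure {
  fint : Fsym -> list Val -> Val;
  pint : Psym -> list Val -> Prop }.

Definition assignment := Var -> Val.

Definition upd (e : assignment) (x : Var) (d : Val) : assignment :=
  fun y => if Var_eq_dec x y then d else e y.

Fixpoint teval (M : structure) (e : assignment) (t : term) : Val :=
  match t with
  | tvar v => e v
  | tapp f ts => fint M f (map (teval M e) ts)
  end.

Fixpoint sat (M : structure) (e : assignment) (a : formula) : Prop :=
  match a with
  | ftrue => True
  | ffalse => False
  | fpred p ts => pint M p (map (teval M e) ts)
  | feq t1 t2 => teval M e t1 = teval M e t2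
  | fnot a => ~ sat M e a
  | fand a b => sat M e a /\ sat M e b
  | f_or a b => sat M e a \/ sat M e b
  | fimp a b => sat M e a -> sat M e b
  | fex x a => exists d, sat M (upd e x d) a
  | fall x a => forall d, sat M (upd e x d) a
  end.

Fixpoint tfv (t : term) : list Var :=
  match t with
  | tvar v => [v]
  | tapp _ ts => flat_map tfv ts
  end.

Fixpoint ffv (a : formula) : list Var :=
  match a with
  | ftrue | ffalse => []
  | fpred _ ts => flat_map tfv ts
  | feq t1 t2 => tfv t1 ++ tfv t2
  | fnot a => ffv a
  | fand a b | f_or a b | fimp a b => ffv a ++ ffv b
  | fex x a | fall x a => remove Var_eq_dec x (ffv a)
  end.

Fixpoint trename (s : Var -> Var) (t : term) : term :=
  match t with
  | tvar v => tvar (s v)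
  | tapp f ts => tapp f (map (trename s) ts)
  end.

Fixpoint frename (s : Var -> Var) (a : formula) : formula :=
  match a with
  | ftrue => ftrue
  | ffalse => ffalse
  | fpred p ts => fpred p (map (trename s) ts)
  | feq t1 t2 => feq (trename s t1) (trename s t2)
  | fnot a => fnot (frename s a)
  | fand a b => fand (frename s a) (frename s b)
  | f_or a b => f_or (frename s a) (frename s b)
  | fimp a b => fimp (frename s a) (frename s b)
  | fex x a => fex (s x) (frename s a)
  | fall x a => fall (s x) (frename s a)
  end.

(* A theory T is given by its class of models (all with carrier Val);
   nu |=_T alpha  means alpha holds under nu in every model of T. *)
Definition entails (T : structure -> Prop) (e : assignment) (a : formula) : Prop :=
  forall M, T M -> sat M e a.

End FO.

(* The bijective swap x <-> x' ; used to implement alpha[V |-> V'] without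
   variable capture (bound variables are renamed consistently). *)
Definition swap_prime (v : Var) : Var :=
  match v with vbase x => vprime x | vprime x => vbase x end.

Definition prime_formula {F P : Type} (a : formula F P) : formula F P :=
  frename swap_prime a.

(* <nu1, nu2> := nu1 \uplus nu2' *)
Definition pair_assign {Val : Type} (n1 n2 : assignment Val) : assignment Val :=
  fun v => match v with vbase x => n1 (vbase x) | vprime x => n2 (vbase x) end.

Definition over_V {F P : Type} (V : list nat) (a : formula F P) : Prop :=
  forall v, In v (ffv a) -> exists x, In x V /\ v = vbase x.

Definition over_VV' {F P : Type} (V : list nat) (a : formula F P) : Prop :=
  forall v, In v (ffv a) -> exists x, In x V /\ (v = vbase x \/ v = vprime x).

Definition is_GAL {F P Val : Type} (T : structure F P Val -> Prop) (V : list nat)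
  (base stay step conc : formula F P) : Prop :=
  over_V V base /\ over_V V conc /\ over_VV' V stay /\ over_VV' V step /\
  (forall alpha : nat -> assignment Val,
     entails T (alpha 0) conc ->
     (forall i, entails T (pair_assign (alpha i) (alpha (S i))) (f_or step stay)) ->
     (forall i, exists j, i <= j /\
        entails T (pair_assign (alpha j) (alpha (S j))) step) ->
     exists k, entails T (alpha k) base) /\
  (forall nu nu' : assignment Val,
     entails T nu conc ->
     entails T (pair_assign nu nu') (f_or step stay) ->
     entails T nu' conc).

(** The invariant [inv] holds at every state of a run of the strengthened
    transition relation: at the start by the strengthened conclusion, and after
    each transition because both [stay /\ inv'] and [step /\ inv'] assert [inv]
    of the successor state.  Dropping the conjuncts [inv] and [inv'] yields a run
    of the original GAL, which reaches [base] and preserves [conc]; pairing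
    these with [inv] gives the two GAL conditions for the strengthened tuple. *)
From Stdlib Require Import List.
Import ListNotations.
Set Implicit Arguments.

Section Semantics.
Variables (Fsym Psym Val : Type).

Fixpoint term_ind' (P : term Fsym -> Prop)
  (Hvar : forall v, P (tvar Fsym v))
  (Happ : forall f ts, Forall P ts -> P (tapp f ts)) (t : term Fsym) : P t :=
  match t with
  | tvar _ v => Hvar v
  | tapp f ts =>
      Happ f ts ((fix all_terms (ts : list (term Fsym)) : Forall P ts :=
                    match ts with
                    | [] => Forall_nil P
                    | t :: ts => Forall_cons t (term_ind' Hvar Happ t) (all_terms ts)
                    end) ts)
  end.

Lemma teval_coincide (M : structure Fsym Psym Val) (t : term Fsym) (e1 e2 : assignment Val) :
  (forall v, In v (tfv t) -> e1 v = e2 v) -> teval M e1 t = teval M e2 t.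
Proof.
  revert e1 e2; induction t as [v | f ts IH] using term_ind'; intros e1 e2 Hagree; simpl.
  - apply Hagree; simpl; auto.
  - f_equal; apply map_ext_in; intros t Ht.
    rewrite Forall_forall in IH; apply IH; auto.
    intros v Hv; apply Hagree, in_flat_map; eauto.
Qed.

Lemma upd_agree (l : list Var) (x : Var) (d : Val) (e1 e2 : assignment Val) :
  (forall v, In v (remove Var_eq_dec x l) -> e1 v = e2 v) ->
  forall v, In v l -> upd e1 x d v = upd e2 x d v.
Proof.
  intros Hagree v Hv; unfold upd.
  destruct (Var_eq_dec x v) as [_ | Hxv]; auto.
  apply Hagree, in_in_remove; auto.
Qed.

Lemma sat_coincide (M : structure Fsym Psym Val) (a : formula Fsym Psym) (e1 e2 : assignment Val) :
  (forall v, In v (ffv a) -> e1 v = e2 v) -> (sat M e1 a <-> sat M e2 a).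
Proof.
  revert e1 e2; induction a; intros e1 e2 Hagree; simpl in *; try tauto.
  - rewrite (map_ext_in _ (teval M e2) args); [tauto |].
    intros t Ht; apply teval_coincide; intros v Hv; apply Hagree, in_flat_map; eauto.
  - rewrite (teval_coincide M t1 e1 e2), (teval_coincide M t2 e1 e2); [tauto | |];
      intros v Hv; apply Hagree, in_or_app; auto.
  - rewrite (IHa e1 e2); tauto.
  - rewrite (IHa1 e1 e2), (IHa2 e1 e2); [tauto | |]; intros v Hv; apply Hagree, in_or_app; auto.
  - rewrite (IHa1 e1 e2), (IHa2 e1 e2); [tauto | |]; intros v Hv; apply Hagree, in_or_app; auto.
  - rewrite (IHa1 e1 e2), (IHa2 e1 e2); [tauto | |]; intros v Hv; apply Hagree, in_or_app; auto.
  - split; intros [d Hd]; exists d;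
      [rewrite <- (IHa (upd e1 x d) (upd e2 x d)) | rewrite (IHa (upd e1 x d) (upd e2 x d))];
      auto; apply upd_agree; auto.
  - split; intros Hd d;
      [rewrite <- (IHa (upd e1 x d) (upd e2 x d)) | rewrite (IHa (upd e1 x d) (upd e2 x d))];
      auto; apply upd_agree; auto.
Qed.

(* Renaming is stated for pointwise related assignments, so that no functional
   extensionality is needed in the binder cases. *)
Lemma teval_rename (M : structure Fsym Psym Val) (s : Var -> Var) (t : term Fsym)
  (e e' : assignment Val) :
  (forall v, e' v = e (s v)) -> teval M e (trename s t) = teval M e' t.
Proof.
  intros Hrel; induction t as [v | f ts IH] using term_ind'; simpl; auto.
  f_equal; rewrite map_map; apply map_ext_in; intros t Ht.
  rewrite Forall_forall in IH; auto.
Qed.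

Section InjectiveRenaming.
Variable s : Var -> Var.
Hypothesis s_inj : forall x y, s x = s y -> x = y.

Lemma upd_rename (e e' : assignment Val) (x : Var) (d : Val) :
  (forall v, e' v = e (s v)) -> forall v, upd e' x d v = upd e (s x) d (s v).
Proof.
  intros Hrel v; unfold upd.
  destruct (Var_eq_dec x v) as [Hxv | Hxv], (Var_eq_dec (s x) (s v)) as [Hs | Hs]; auto.
  - now contradiction Hs; subst.
  - now apply s_inj in Hs.
Qed.

Lemma sat_rename (M : structure Fsym Psym Val) (a : formula Fsym Psym) (e e' : assignment Val) :
  (forall v, e' v = e (s v)) -> (sat M e (frename s a) <-> sat M e' a).
Proof.
  revert e e'; induction a; intros e e' Hrel; simpl; try tauto.
  - rewrite map_map, (map_ext_in _ (teval M e') args); [tauto |].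
    intros t _; apply teval_rename; auto.
  - rewrite !(teval_rename M s _ e e'); tauto.
  - rewrite (IHa e e'); tauto.
  - rewrite (IHa1 e e'), (IHa2 e e'); tauto.
  - rewrite (IHa1 e e'), (IHa2 e e'); tauto.
  - rewrite (IHa1 e e'), (IHa2 e e'); tauto.
  - split; intros [d Hd]; exists d;
      [rewrite <- (IHa (upd e (s x) d) (upd e' x d)) | rewrite (IHa (upd e (s x) d) (upd e' x d))];
      auto; apply upd_rename; auto.
  - split; intros Hd d;
      [rewrite <- (IHa (upd e (s x) d) (upd e' x d)) | rewrite (IHa (upd e (s x) d) (upd e' x d))];
      auto; apply upd_rename; auto.
Qed.

Lemma remove_map (x : Var) (l : list Var) :
  remove Var_eq_dec (s x) (map s l) = map s (remove Var_eq_dec x l).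
Proof.
  induction l as [| y l IH]; simpl; auto.
  destruct (Var_eq_dec (s x) (s y)) as [Hs | Hs], (Var_eq_dec x y) as [Hxy | Hxy];
    simpl; rewrite ?IH; auto.
  - now apply s_inj in Hs.
  - now subst.
Qed.

Lemma tfv_rename (t : term Fsym) : tfv (trename s t) = map s (tfv t).
Proof.
  induction t as [v | f ts IH] using term_ind'; simpl; auto.
  rewrite !flat_map_concat_map, concat_map, !map_map; f_equal.
  apply map_ext_in; intros t Ht; rewrite Forall_forall in IH; auto.
Qed.

Lemma ffv_rename (a : formula Fsym Psym) : ffv (frename s a) = map s (ffv a).
Proof.
  induction a; simpl; rewrite ?map_app, ?IHa, ?IHa1, ?IHa2, ?remove_map; auto.
  - rewrite !flat_map_concat_map, concat_map, !map_map; f_equal.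
    apply map_ext; intros t; apply tfv_rename.
  - now rewrite !tfv_rename.
Qed.

End InjectiveRenaming.

Lemma swap_prime_inj (x y : Var) : swap_prime x = swap_prime y -> x = y.
Proof. destruct x, y; simpl; intros Heq; inversion Heq; auto. Qed.

Lemma sat_prime_formula (M : structure Fsym Psym Val) (V : list nat) (a : formula Fsym Psym)
  (n1 n2 : assignment Val) :
  over_V V a -> (sat M (pair_assign n1 n2) (prime_formula a) <-> sat M n2 a).
Proof.
  intros Ha; unfold prime_formula.
  rewrite (sat_rename swap_prime swap_prime_inj M a _ (fun v => pair_assign n1 n2 (swap_prime v)))
    by reflexivity.
  apply sat_coincide; intros v Hv.
  destruct (Ha v Hv) as [x [_ ->]]; reflexivity.
Qed.

Lemma over_VV'_prime_formula (V : list nat) (a : formula Fsym Psym) :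
  over_V V a -> over_VV' V (prime_formula a).
Proof.
  intros Ha v Hv; unfold prime_formula in Hv.
  rewrite ffv_rename in Hv by exact swap_prime_inj.
  apply in_map_iff in Hv as [w [<- Hw]].
  destruct (Ha w Hw) as [x [Hx ->]]; exists x; simpl; auto.
Qed.

Lemma over_V_fand (V : list nat) (a b : formula Fsym Psym) :
  over_V V a -> over_V V b -> over_V V (fand a b).
Proof. intros Ha Hb v Hv; simpl in Hv; apply in_app_or in Hv as [Hv | Hv]; auto. Qed.

Lemma over_VV'_fand (V : list nat) (a b : formula Fsym Psym) :
  over_VV' V a -> over_VV' V b -> over_VV' V (fand a b).
Proof. intros Ha Hb v Hv; simpl in Hv; apply in_app_or in Hv as [Hv | Hv]; auto. Qed.

End Semantics.

Section Entailment.
Variables (Fsym Psym Val : Type) (T : structure Fsym Psym Val -> Prop).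

Lemma entails_fand (e : assignment Val) (a b : formula Fsym Psym) :
  entails T e (fand a b) <-> entails T e a /\ entails T e b.
Proof. unfold entails; simpl; firstorder. Qed.

Lemma entails_or_fand_r (e : assignment Val) (a b c : formula Fsym Psym) :
  entails T e (f_or (fand a c) (fand b c)) -> entails T e (f_or a b) /\ entails T e c.
Proof. unfold entails; simpl; firstorder. Qed.

Lemma entails_prime_formula (V : list nat) (a : formula Fsym Psym) (n1 n2 : assignment Val) :
  over_V V a -> (entails T (pair_assign n1 n2) (prime_formula a) <-> entails T n2 a).
Proof.
  intros Ha; unfold entails; split; intros H M HM; eapply sat_prime_formula; eauto.
Qed.

End Entailment.

Section StrengthenGAL.
Variables (Fsym Psym Val : Type) (T : structure Fsym Psym Val -> Prop) (V : list nat).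
Variables base stay step conc inv : formula Fsym Psym.
Hypothesis inv_over_V : over_V V inv.

Let stay_inv := fand stay (prime_formula inv).
Let step_inv := fand step (prime_formula inv).

Lemma entails_inv_of_transition (nu nu' : assignment Val) :
  entails T (pair_assign nu nu') (f_or step_inv stay_inv) -> entails T nu' inv.
Proof.
  intros Htr; apply (entails_prime_formula T nu nu' inv_over_V).
  exact (proj2 (entails_or_fand_r Htr)).
Qed.

Lemma GAL_reaches_base_inv :
  (forall alpha : nat -> assignment Val,
     entails T (alpha 0) conc ->
     (forall i, entails T (pair_assign (alpha i) (alpha (S i))) (f_or step stay)) ->
     (forall i, exists j, i <= j /\ entails T (pair_assign (alpha j) (alpha (S j))) step) ->
     exists k, entails T (alpha k) base) ->
  forall alpha : nat -> assignment Val,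
    entails T (alpha 0) (fand conc inv) ->
    (forall i, entails T (pair_assign (alpha i) (alpha (S i))) (f_or step_inv stay_inv)) ->
    (forall i, exists j, i <= j /\ entails T (pair_assign (alpha j) (alpha (S j))) step_inv) ->
    exists k, entails T (alpha k) (fand base inv).
Proof.
  intros Hreach alpha Hinit Htr Hprog.
  apply entails_fand in Hinit as [Hconc Hinv0].
  assert (Hinv : forall i, entails T (alpha i) inv).
  { intros [| i]; [exact Hinv0 | exact (entails_inv_of_transition (Htr i))]. }
  destruct (Hreach alpha) as [k Hk]; auto.
  - intros i; exact (proj1 (entails_or_fand_r (Htr i))).
  - intros i; destruct (Hprog i) as [j [Hij Hj]].
    apply entails_fand in Hj as [Hj _]; eauto.
  - exists k; apply entails_fand; auto.
Qed.

Lemma GAL_closed_inv :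
  (forall nu nu' : assignment Val,
     entails T nu conc -> entails T (pair_assign nu nu') (f_or step stay) -> entails T nu' conc) ->
  forall nu nu' : assignment Val,
    entails T nu (fand conc inv) ->
    entails T (pair_assign nu nu') (f_or step_inv stay_inv) -> entails T nu' (fand conc inv).
Proof.
  intros Hclosed nu nu' Hinit Htr; apply entails_fand; split.
  - apply entails_fand in Hinit as [Hconc _].
    exact (Hclosed nu nu' Hconc (proj1 (entails_or_fand_r Htr))).
  - exact (entails_inv_of_transition Htr).
Qed.

End StrengthenGAL.

Theorem lemma4 (Fsym Psym Val : Type) (T : structure Fsym Psym Val -> Prop)
  (V : list nat) (base stay step conc inv : formula Fsym Psym) :
  is_GAL T V base stay step conc ->
  over_V V inv ->
  is_GAL T V (fand base inv) (fand stay (prime_formula inv))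
             (fand step (prime_formula inv)) (fand conc inv).
Proof.
  intros [Hbase [Hconc [Hstay [Hstep [Hreach Hclosed]]]]] Hinv.
  pose proof (over_VV'_prime_formula Hinv) as Hinv'.
  split; [| split; [| split; [| split; [| split]]]].
  - exact (over_V_fand Hbase Hinv).
  - exact (over_V_fand Hconc Hinv).
  - exact (over_VV'_fand Hstay Hinv').
  - exact (over_VV'_fand Hstep Hinv').
  - exact (GAL_reaches_base_inv Hinv Hreach).
  - exact (GAL_closed_inv Hinv Hclosed).
Qed.
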